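(* Let $X$ be a metric space and $1\le p\le q<\infty$. Then for every $S>0$, $\epsilon_{X;p}(S)\le \frac{q}{p}\,\epsilon_{X;q}(S)$.
   Context: For a metric space $(X,d)$ and $1\le p<\infty$, $\ell^p(X)$ is the space of $p$-summable real functions on $X$ and $\ell^p_1(X)$ its unit sphere. For a map $\xi\colon X\to\ell^p(X)$, written $x\mapsto\xi_x$, put $S(\xi)=\sup\{d(x,y):\xi_x(y)\neq0\}$ and $\varepsilon(\xi;p)=\sup_{x\ne y}\|\xi_x-\xi_y\|_p/d(x,y)$. The profile is $\epsilon_{X;p}(S)=\inf\{\varepsilon(\xi;p):\xi\colon X\to\ell^p_1(X),\ S(\xi)\le S\}$. *)

From HB Require Import structures.
From mathcomp Require Import all_boot all_order all_algebra.
From mathcomp Require Import all_classical all_reals all_analysis.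
Set Implicit Arguments. Unset Strict Implicit. Unset Printing Implicit Defensive.
Import Order.TTheory GRing.Theory Num.Theory.
Local Open Scope classical_set_scope.
Local Open Scope ring_scope.

Definition is_metric (R : realType) (X : Type) (d : X -> X -> R) : Prop :=
  [/\ forall x y, 0 <= d x y,
      forall x y, d x y = 0 <-> x = y,
      forall x y, d x y = d y x &
      forall x y z, d x z <= d x y + d y z].

Definition lpsum (R : realType) (X : choiceType) (p : R) (f : X -> R) : \bar R :=
  \esum_(y in [set: X]) ((`|f y| `^ p)%:E).

Definition in_lp (R : realType) (X : choiceType) (p : R) (f : X -> R) : Prop :=
  (lpsum p f < +oo)%E.

Definition lpnorm (R : realType) (X : choiceType) (p : R) (f : X -> R) : \bar R :=
  ((lpsum p f) `^ (p^-1))%E.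

Definition in_lp_sphere (R : realType) (X : choiceType) (p : R) (f : X -> R) : Prop :=
  in_lp p f /\ lpnorm p f = 1%E.

Definition support_radius (R : realType) (X : choiceType) (d : X -> X -> R)
  (xi : X -> X -> R) : \bar R :=
  ereal_sup [set r | exists x y, xi x y != 0 /\ r = (d x y)%:E].

(* eps(xi;p) = sup_{x <> y} ||xi_x - xi_y||_p / d(x,y)
   (0 is added to the set so that the sup of the nonnegative ratios is 0 when X has <2 points) *)
Definition eps_xi (R : realType) (X : choiceType) (d : X -> X -> R) (p : R)
  (xi : X -> X -> R) : \bar R :=
  ereal_sup ([set 0%E] `|`
    [set r | exists x y, x != y /\
       r = (lpnorm p (fun z => (xi x z - xi y z)%R) * ((d x y)^-1)%:E)%E]).

Definition profile (R : realType) (X : choiceType) (d : X -> X -> R) (p S : R) : \bar R :=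
  ereal_inf [set eps_xi d p xi | xi in
    [set xi : X -> X -> R | (forall x, in_lp_sphere p (xi x)) /\
                            (support_radius d xi <= S%:E)%E]].

From mathcomp Require Import all_boot all_order all_algebra.
From mathcomp Require Import all_classical all_reals all_analysis.
From mathcomp Require Import ring lra.
Import Order.TTheory GRing.Theory Num.Theory.
Import numFieldNormedType.Exports.
Local Open Scope classical_set_scope.
Local Open Scope ring_scope.

(* The Mazur map f |-> |f|^(q/p) sends the unit sphere of l^q into that of l^p, keeps
   supports, and is (q/p)-Lipschitz from l^q_1 to l^p_1; so composing any competitor xi
   for the q-profile with it gives a competitor for the p-profile whose Lipschitz constant
   grows by at most q/p.  The Lipschitz bound rests on the pointwise inequality
   | |a|^r - |b|^r | <= r |a - b| ((|a|^q + |b|^q) / 2)^((r - 1) / q)  for r = q/p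
   (mean value of t^(r-1) on [|b|, |a|], bounded by Hermite-Hadamard and the power mean
   inequality), summed with Hoelder's inequality for the exponents q/p and q/(q-p). *)

Section RealPowers.
Context {R : realType}.
Implicit Types a b c k p q r s t u v x y : R.

Lemma ler_powRl s [x y] : 0 <= s -> 0 <= x -> x <= y -> x `^ s <= y `^ s.
Proof.
move=> s0 x0 xy.
by apply: (ge0_ler_powR s0); rewrite ?nnegrE//; apply: le_trans xy.
Qed.

Lemma ger_powRl s x y : s <= 0 -> 0 < x -> x <= y -> y `^ s <= x `^ s.
Proof.
move=> s0 x0 xy.
have : x `^ (- s) <= y `^ (- s) by apply: ler_powRl; lra.
by rewrite !powRN lef_pV2 ?posrE ?powR_gt0//; lra.
Qed.

Lemma MVT_pos (f df : R -> R) [a b] : 0 < a -> a <= b ->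
  (forall x, 0 < x -> is_derive x 1 f (df x)) ->
  exists2 c, a <= c <= b & f b - f a = df c * (b - a).
Proof.
move=> a0 ab fD.
have D x : x \in `]a, b[ -> is_derive x 1 f (df x).
  by rewrite in_itv/= => /andP[ax _]; apply: fD; lra.
have C : {within `[a, b], continuous f}.
  apply: derivable_within_continuous => x; rewrite in_itv/= => /andP[ax _].
  by have [] : is_derive x 1 f (df x) by apply: fD; lra.
by have [c] := MVT_segment ab D C; rewrite in_itv/=; exists c.
Qed.

Lemma powR_mvt k [a b] : 0 < a -> a <= b ->
  exists2 c, a <= c <= b & b `^ k - a `^ k = k * c `^ (k - 1) * (b - a).
Proof.
move=> a0 ab.
have [c cab] := MVT_pos (@powR R ^~ k) (fun c => k * c `^ (k - 1)) a0 ab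
  (is_derive1_powR k).
by exists c.
Qed.

Lemma powR_ge_tangent k c b : 1 <= k -> 0 < c -> 0 <= b ->
  c `^ k + k * c `^ (k - 1) * (b - c) <= b `^ k.
Proof.
move=> k1 c0; rewrite le_eqVlt => /predU1P[<-|b0].
  have ck : c * c `^ (k - 1) = c `^ k by apply: mulr_powRB1; lra.
  rewrite powR0; last by apply/eqP; lra.
  have := powR_ge0 c k; nra.
have [bc|cb] := leP b c.
  have [d /andP[bd dc] E] := powR_mvt k b0 bc.
  have : d `^ (k - 1) <= c `^ (k - 1) by apply: ler_powRl; lra.
  have : 0 <= k * (c - b) by apply: mulr_ge0; lra.
  nra.
have [d /andP[cd db] E] := powR_mvt k c0 (ltW cb).
have : c `^ (k - 1) <= d `^ (k - 1) by apply: ler_powRl; lra.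
have : 0 <= k * (b - c) by apply: mulr_ge0; lra.
nra.
Qed.

Lemma powR_le_tangent k c b : 0 <= k <= 1 -> 0 < c -> 0 <= b ->
  b `^ k <= c `^ k + k * c `^ (k - 1) * (b - c).
Proof.
move=> /andP[k0 k1] c0; rewrite le_eqVlt => /predU1P[<-|b0].
  have [->|kn0] := eqVneq k 0; first by rewrite !powRr0; lra.
  have ck : c * c `^ (k - 1) = c `^ k by apply: mulr_powRB1; rewrite ?lt_def ?kn0; lra.
  rewrite powR0 //; have := powR_ge0 c k; nra.
have [bc|cb] := leP b c.
  have [d /andP[bd dc] E] := powR_mvt k b0 bc.
  have : c `^ (k - 1) <= d `^ (k - 1) by apply: ger_powRl; lra.
  have : 0 <= k * (c - b) by apply: mulr_ge0; lra.
  nra.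
have [d /andP[cd db] E] := powR_mvt k c0 (ltW cb).
have : d `^ (k - 1) <= c `^ (k - 1) by apply: ger_powRl; lra.
have : 0 <= k * (b - c) by apply: mulr_ge0; lra.
nra.
Qed.

(* The mean of [t `^ k] over [[b, a]] is [(a `^ (k + 1) - b `^ (k + 1)) / ((k + 1) * (a - b))];
   the next two lemmas are the Hermite-Hadamard bounds on it, for convex and for concave powers. *)
Lemma powR_sub_le_trapezoid k a b : 1 <= k -> 0 <= b -> b <= a ->
  a `^ (k + 1) - b `^ (k + 1) <= (k + 1) * (a - b) * ((a `^ k + b `^ k) / 2).
Proof.
move=> k1; rewrite le_eqVlt => /predU1P[<-|b0] ba.
  have ak : a * a `^ k = a `^ (k + 1).
    by have := @mulr_powRB1 R a (k + 1) ba; rewrite addrK; apply; lra.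
  rewrite !powR0 ?subr0 ?addr0; try by apply/eqP; lra.
  have := mulr_ge0 ba (powR_ge0 a k); nra.
pose phi := (cst ((k + 1) / 2) * (@id R - cst b)) * (@powR R ^~ k + cst (b `^ k))
  - @powR R ^~ (k + 1).
pose dphi x := (k + 1) / 2 * (x `^ k + b `^ k)
  + (k + 1) / 2 * (x - b) * (k * x `^ (k - 1)) - (k + 1) * x `^ k.
have D x : 0 < x -> is_derive x 1 phi (dphi x).
  move=> x0; have [d e] := is_deriveB (is_deriveM (is_deriveM
    (is_derive_cst ((k + 1) / 2) x 1) (is_deriveB (is_derive_id x 1) (is_derive_cst b x 1)))
    (is_deriveD (is_derive1_powR k x0) (is_derive_cst (b `^ k) x 1)))
    (is_derive1_powR (k + 1) x0).
  split => //; rewrite e /GRing.scale/= !fctE/= addrK /dphi; ring.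
have [c /andP[bc _]] := MVT_pos phi dphi b0 ba D.
rewrite /phi !fctE/= => E.
suff : 0 <= dphi c * (a - b) by lra.
apply: mulr_ge0; last by lra.
have := powR_ge_tangent k c b k1 (lt_le_trans b0 bc) (ltW b0).
rewrite /dphi; nra.
Qed.

Lemma powR_sub_le_midpoint k a b : 0 <= k <= 1 -> 0 <= b -> b <= a ->
  a `^ (k + 1) - b `^ (k + 1) <= (k + 1) * (a - b) * (2^-1 * (a + b)) `^ k.
Proof.
move=> k01; have /andP[k0 k1] := k01.
rewrite le_eqVlt => /predU1P[<-|b0] ba.
  have ak : a * a `^ k = a `^ (k + 1).
    by have := @mulr_powRB1 R a (k + 1) ba; rewrite addrK; apply; lra.
  have half_k : 2^-1 `^ k * 2 `^ k = 1 :> R.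
    by rewrite -powRM ?invr_ge0// mulVf ?pnatr_eq0// powR1.
  have := powR_le_tangent k 1 2 k01 ltr01 (ler0n _ 2).
  rewrite !powR1 powR0 ?subr0 ?addr0 ?powRM ?invr_ge0//; last by apply/eqP; lra.
  have := powR_ge0 (2^-1 : R) k; rewrite -ak => t0 two_k.
  have : 1 <= (k + 1) * 2^-1 `^ k by nra.
  have := mulr_ge0 ba (powR_ge0 a k); nra.
pose mid := cst 2^-1 * (@id R + cst b).
pose phi := (cst (k + 1) * (@id R - cst b)) * (@powR R ^~ k \o mid) - @powR R ^~ (k + 1).
pose dphi x := (k + 1) * (2^-1 * (x + b)) `^ k
  + (k + 1) * (x - b) * (k * (2^-1 * (x + b)) `^ (k - 1) * 2^-1) - (k + 1) * x `^ k.
have D x : 0 < x -> is_derive x 1 phi (dphi x).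
  move=> x0; have mx0 : 0 < mid x by rewrite /mid !fctE/=; lra.
  have [d e] := is_deriveB (is_deriveM (is_deriveM
    (is_derive_cst (k + 1) x 1) (is_deriveB (is_derive_id x 1) (is_derive_cst b x 1)))
    (is_derive1_comp (is_derive1_powR k mx0) (is_deriveM (is_derive_cst (2^-1 : R) x 1)
      (is_deriveD (is_derive_id x 1) (is_derive_cst b x 1)))))
    (is_derive1_powR (k + 1) x0).
  split => //; rewrite e /GRing.scale/= !fctE/= addrK /dphi; ring.
have [c /andP[bc _]] := MVT_pos phi dphi b0 ba D.
rewrite /phi /mid !fctE/= => E.
suff : 0 <= dphi c * (a - b) by lra.
apply: mulr_ge0; last by lra.
have m0 : 0 < 2^-1 * (c + b) by lra.
have := powR_le_tangent k (2^-1 * (c + b)) c k01 m0 (ltW (lt_le_trans b0 bc)).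
rewrite /dphi; nra.
Qed.

Lemma powR_midpoint_convex p x y : 1 <= p -> 0 <= x -> 0 <= y ->
  ((x + y) / 2) `^ p <= (x `^ p + y `^ p) / 2.
Proof.
move=> p1 x0 y0.
have half : 1 - 2^-1 = 2^-1 :> R by rewrite {1}(splitr 1) div1r addrK.
have -> : (x + y) / 2 = 2^-1 * x + (1 - 2^-1) * y by rewrite half; ring.
have -> : (x `^ p + y `^ p) / 2 = 2^-1 * x `^ p + (1 - 2^-1) * y `^ p.
  by rewrite half; ring.
by apply: (convex_powR p1 (Itv01 _ _)) => //=;
  rewrite ?inE/= ?in_itv/= ?invr_ge0// ?invf_le1 ?ler1n// andbT.
Qed.

Lemma power_mean_le s q x y : 0 < s <= q -> 0 <= x -> 0 <= y ->
  ((x `^ s + y `^ s) / 2) `^ s^-1 <= ((x `^ q + y `^ q) / 2) `^ q^-1.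
Proof.
move=> /andP[s0 sq] x0 y0.
have q0 : 0 < q by lra.
have sqs : s * (q / s) = q by rewrite mulrCA mulfV ?gt_eqF// mulr1.
have qs1 : 1 <= q / s by rewrite ler_pdivlMr// mul1r.
have := powR_midpoint_convex (q / s) (x `^ s) (y `^ s) qs1 (powR_ge0 _ _) (powR_ge0 _ _).
have qV0 : 0 <= q^-1 by rewrite invr_ge0 ltW.
rewrite -!powRrM sqs => /(ler_powRl _ qV0 (powR_ge0 _ _)).
by rewrite -powRrM mulrAC mulfV ?gt_eqF// mul1r.
Qed.

Lemma powR_sub_le_power_mean a b r q : 0 <= b <= a -> 1 <= r <= q ->
  a `^ r - b `^ r <= r * (a - b) * ((a `^ q + b `^ q) / 2) `^ ((r - 1) / q).
Proof.
move=> /andP[b0 ba] /andP[r1 rq].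
have q0 : 0 < q by lra.
set M := (a `^ q + b `^ q) / 2.
have Mk : M `^ ((r - 1) / q) = (M `^ q^-1) `^ (r - 1) by rewrite -powRrM mulrC.
suff [K [rK KM]] : exists K, a `^ r - b `^ r <= r * (a - b) * K /\ K <= M `^ ((r - 1) / q).
  by apply: (le_trans rK); apply: ler_wpM2l => //; apply: mulr_ge0; lra.
have [r2|r2] := leP r 2.
  exists ((2^-1 * (a + b)) `^ (r - 1)); split.
    by rewrite -{1 2 3}(subrK 1 r); apply: powR_sub_le_midpoint => //; lra.
  rewrite Mk; apply: ler_powRl; [lra|lra|].
  have q01 : (0 : R) < 1 <= q by rewrite ltr01; lra.
  have := power_mean_le 1 q a b q01 (le_trans b0 ba) b0.
  by rewrite -/M invr1 !powRr1 ?[2^-1 * _]mulrC//; lra.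
exists ((a `^ (r - 1) + b `^ (r - 1)) / 2); split.
  by rewrite -{1 2 3}(subrK 1 r); apply: powR_sub_le_trapezoid => //; lra.
have rq' : 0 < r - 1 <= q by apply/andP; split; lra.
have := power_mean_le (r - 1) q a b rq' (le_trans b0 ba) b0.
have r10 : 0 <= r - 1 by lra.
move=> /(ler_powRl (r - 1) r10 (powR_ge0 _ _)).
rewrite -/M -Mk -powRrM mulVf ?powRr1//; last by apply/eqP; lra.
by apply: divr_ge0 => //; apply: addr_ge0; exact: powR_ge0.
Qed.

Lemma mazur_pointwise p q u v : 1 <= p <= q ->
  `| `|u| `^ (q / p) - `|v| `^ (q / p) | `^ p <=
  (q / p) `^ p * ((`|u - v| `^ q) `^ (p / q) * ((`|u| `^ q + `|v| `^ q) / 2) `^ (1 - p / q)).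
Proof.
move=> /andP[p1 pq]; have p0 : 0 < p by lra.
have q0 : 0 < q by lra.
wlog vu : u v / `|v| <= `|u|.
  move=> W; have [vu|uv] := leP `|v| `|u|; first exact: W.
  by rewrite distrC [`|u - v|]distrC [`|u| `^ q + _]addrC; apply: W; exact: ltW.
have r1q : 1 <= q / p <= q by rewrite ler_pdivlMr// ler_pdivrMr// mul1r; apply/andP; split; nra.
have vu' : 0 <= `|v| <= `|u| by rewrite normr_ge0.
have := powR_sub_le_power_mean _ _ _ _ vu' r1q.
set M := (`|u| `^ q + `|v| `^ q) / 2 => K.
have diff0 : 0 <= `|u| `^ (q / p) - `|v| `^ (q / p).
  by rewrite subr_ge0; apply: ler_powRl; rewrite ?divr_ge0//; lra.
have K' : `|u| `^ (q / p) - `|v| `^ (q / p) <= q / p * `|u - v| * M `^ ((q / p - 1) / q).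
  apply: (le_trans K); apply: ler_wpM2r; first exact: powR_ge0.
  by apply: ler_wpM2l; [rewrite divr_ge0//; lra | exact: lerB_dist].
rewrite ger0_norm//; apply: (le_trans (ler_powRl p (ltW p0) diff0 K')).
have qp : q * (p / q) = p by field; apply/eqP; lra.
have ep : (q / p - 1) / q * p = 1 - p / q by field; apply/andP; split; apply/eqP; lra.
have r0 : 0 <= q / p by rewrite divr_ge0//; lra.
rewrite (powRM _ (mulr_ge0 r0 (normr_ge0 _)) (powR_ge0 _ _)).
by rewrite (powRM _ r0 (normr_ge0 _)) -!powRrM qp ep mulrA.
Qed.

Lemma powR_weighted_am_gm t a b : 0 < t < 1 -> 0 <= a -> 0 <= b ->
  a `^ t * b `^ (1 - t) <= t * a + (1 - t) * b.
Proof.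
move=> /andP[t0 t1] a0 b0.
have t'0 : 0 < 1 - t by lra.
have tV : 0 < t^-1 by rewrite invr_gt0.
have tV' : 0 < (1 - t)^-1 by rewrite invr_gt0.
have conj : t^-1^-1 + (1 - t)^-1^-1 = 1 by rewrite !invrK; ring.
have := conjugate_powR (powR_ge0 a t) (powR_ge0 b (1 - t)) tV tV' conj.
by rewrite -!powRrM !mulfV ?gt_eqF// ?powRr1// !invrK [t * a]mulrC [(1 - t) * b]mulrC.
Qed.

End RealPowers.


Section Esum.
Context {R : realType} {T : choiceType}.
Local Open Scope ereal_scope.

Lemma esumZl (D : set T) (c : R) (f : T -> \bar R) : (0 <= c)%R -> (forall x, 0 <= f x) ->
  \esum_(i in D) (c%:E * f i) = c%:E * \esum_(i in D) f i.
Proof.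
move=> c0 f0; rewrite /esum.
have -> : [set \sum_(x \in A) (c%:E * f x) | A in fsets D] =
   [set c%:E * y | y in [set \sum_(x \in A) f x | A in fsets D]].
  by rewrite image_comp; apply: eq_imagel => A _ /=; rewrite ge0_mule_fsumr.
move: c0; rewrite le_eqVlt => /predU1P[<-|c0]; last exact: ereal_sup_pZl.
rewrite mul0e; under eq_imagel do rewrite mul0e.
rewrite ereal_sup_cst //; apply/set0P; exists (\sum_(x \in set0) f x).
by exists set0 => //; exact: fsets_set0.
Qed.

Lemma esum_powR_hoelder (t : R) (f g : T -> R) : (0 < t < 1)%R ->
  (forall z, 0 <= f z)%R -> (forall z, 0 <= g z)%R ->
  \esum_(z in [set: T]) (g z)%:E <= 1 ->
  \esum_(z in [set: T]) (f z `^ t * g z `^ (1 - t))%:E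
    <= (\esum_(z in [set: T]) (f z)%:E) `^ t.
Proof.
move=> t01 f0 g0 g1; have /andP[t0 t1] := t01.
have : 0 <= \esum_(z in [set: T]) (f z)%:E by apply: esum_ge0 => z _; rewrite lee_fin.
case E : (\esum_(z in _) _) => [n| |] // n0; last by rewrite poweRyr ?gt_eqF// leey.
rewrite lee_fin le_eqVlt in n0; case/predU1P: n0 => [n0|n0].
  have fz0 z : f z = 0%R.
    apply/le_anti; rewrite f0 andbT -lee_fin n0 -E.
    by apply: esum_ge; exists [set z]; rewrite ?fsbig_set1//; split => //; exact: finite_set1.
  rewrite esum1; first exact: poweR_ge0.
  by move=> z _; rewrite fz0 powR0 ?gt_eqF// mul0r.
apply: (le_trans (le_esum (b := fun z => (n `^ t)%:E *
    ((t / n)%:E * (f z)%:E + (1 - t)%:E * (g z)%:E)) _)).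
  move=> z _; rewrite -!EFinM lee_fin.
  have fzn : (0 <= f z / n)%R by rewrite divr_ge0// ltW.
  rewrite -{1}(divfK (lt0r_neq0 n0) (f z)) powRM ?(ltW n0)// mulrAC [(_ * n `^ t)%R]mulrC -mulrA.
  apply: ler_wpM2l; first exact: powR_ge0.
  have := powR_weighted_am_gm t (f z / n) (g z) t01 fzn (g0 z).
  by rewrite [(n^-1 * _)%R]mulrC.
have tn0 : (0 <= t / n)%R by rewrite divr_ge0// ltW.
have t'0 : (0 <= 1 - t)%R by lra.
rewrite esumZl ?powR_ge0//; last by move=> z; rewrite adde_ge0// mule_ge0// lee_fin.
rewrite esumD; try by move=> z _; rewrite mule_ge0// lee_fin.
rewrite !esumZl//; try by move=> z; rewrite lee_fin.
rewrite E poweR_EFin -EFinM divfK ?lt0r_neq0//.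
rewrite -[leRHS]mule1; apply: lee_wpmul2l; first by rewrite lee_fin powR_ge0.
apply: (le_trans (leeD2l _ (lee_wpmul2l _ g1))); first by rewrite lee_fin.
by rewrite mule1 -EFinD lee_fin; lra.
Qed.

End Esum.

Section MazurMap.
Context {R : realType} {X : choiceType}.
Local Open Scope ereal_scope.
Implicit Types (p q r : R) (f u v : X -> R).

(* The paper's Mazur map keeps the sign of [f]; dropping it is harmless here, since only
   the unit sphere and the supports have to be preserved. *)
Definition mazur_map r f : X -> R := fun z => (`|f z| `^ r)%R.

Lemma lpsum_ge0 p f : 0 <= lpsum p f.
Proof. by apply: esum_ge0 => z _; rewrite lee_fin powR_ge0. Qed.

Lemma lpsum_sphere [q f] : (0 < q)%R -> in_lp_sphere q f -> lpsum q f = 1.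
Proof.
move=> q0 [_]; rewrite /lpnorm; have := lpsum_ge0 q f.
case: (lpsum q f) => [s| |] // s0; last by rewrite poweRyr // invr_eq0 gt_eqF.
rewrite poweR_EFin => -[sq]; rewrite lee_fin in s0.
have -> : s = ((s `^ q^-1) `^ q)%R by rewrite -powRrM mulVf ?gt_eqF// powRr1.
by rewrite sq powR1.
Qed.

Lemma lpsum_mazur_map p q f : (0 < p)%R -> lpsum p (mazur_map (q / p) f) = lpsum q f.
Proof.
move=> p0; apply: eq_esum => z _.
by rewrite /mazur_map ger0_norm ?powR_ge0 // -powRrM divfK ?gt_eqF.
Qed.

Lemma in_lp_sphere_mazur_map p q f : (0 < p)%R -> (0 < q)%R ->
  in_lp_sphere q f -> in_lp_sphere p (mazur_map (q / p) f).
Proof.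
move=> p0 q0 hf; have e := lpsum_sphere q0 hf.
by split; rewrite /in_lp ?/lpnorm lpsum_mazur_map// e ?ltry ?poweR1r.
Qed.

Lemma lpnorm_mazur_map_sub [p q u v] : (1 <= p < q)%R -> lpsum q u = 1 -> lpsum q v = 1 ->
  lpnorm p (fun z => mazur_map (q / p) u z - mazur_map (q / p) v z)%R
    <= (q / p)%:E * lpnorm q (fun z => u z - v z)%R.
Proof.
move=> /andP[p1 pq] hu hv.
have p0 : (0 < p)%R by lra.
have q0 : (0 < q)%R by lra.
have r0 : (0 <= q / p)%R by rewrite divr_ge0// ltW.
pose mean z := ((`|u z| `^ q + `|v z| `^ q) / 2)%R.
have mean_sum : \esum_(z in [set: X]) (mean z)%:E <= 1.
  rewrite (eq_esum (b := fun z => (2^-1)%:E * (`|u z| `^ q)%:E + (2^-1)%:E * (`|v z| `^ q)%:E));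
    last by move=> z _; rewrite -!EFinM -EFinD /mean mulrDl !(mulrC 2^-1%R).
  rewrite esumD; try by move=> z _; rewrite mule_ge0// lee_fin ?powR_ge0.
  rewrite !esumZl//; try by move=> z; rewrite lee_fin powR_ge0.
  by move: hu hv; rewrite /lpsum => -> ->; rewrite -EFinD lee_fin; lra.
have hoelder : lpsum p (fun z => mazur_map (q / p) u z - mazur_map (q / p) v z)%R
    <= ((q / p) `^ p)%:E * lpsum q (fun z => u z - v z)%R `^ (p / q).
  apply: (le_trans (le_esum (b := fun z => ((q / p) `^ p)%:E *
      (((`|u z - v z| `^ q) `^ (p / q) * mean z `^ (1 - p / q))%:E)) _)).
    move=> z _; rewrite -EFinM lee_fin; apply: mazur_pointwise; lra.
  rewrite esumZl ?powR_ge0//; last by move=> z; rewrite lee_fin mulr_ge0 ?powR_ge0.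
  apply: lee_wpmul2l; first by rewrite lee_fin powR_ge0.
  apply: esum_powR_hoelder mean_sum => [|z|z]; rewrite ?powR_ge0//.
  - by rewrite divr_gt0// ltr_pdivrMr// mul1r.
  - by rewrite /mean divr_ge0// addr_ge0// powR_ge0.
have pV0 : (0 <= p^-1)%R by rewrite invr_ge0 ltW.
have := gt0_ler_poweR pV0 _ _ hoelder.
rewrite !in_itv/= !leey lpsum_ge0 mule_ge0 ?lee_fin ?powR_ge0 ?poweR_ge0// => /(_ isT isT).
move=> /le_trans; apply; rewrite poweRM ?lee_fin ?powR_ge0 ?poweR_ge0//.
rewrite poweR_EFin -powRrM mulfV ?gt_eqF// powRr1// -poweRrM.
by rewrite mulrAC mulfV ?gt_eqF// mul1r.
Qed.

Lemma support_radius_mazur_map (d : X -> X -> R) (xi : X -> X -> R) r : (0 < r)%R ->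
  support_radius d (fun x => mazur_map r (xi x)) = support_radius d xi.
Proof.
move=> r0; rewrite /support_radius /mazur_map; congr ereal_sup.
by apply/seteqP; split => _ [x [y [xy ->]]]; exists x, y; split => //;
  move: xy; rewrite powR_eq0 negb_and normr_eq0 (gt_eqF r0) orbF.
Qed.

Lemma eps_xi_mazur_map [d xi : X -> X -> R] [p q] :
  (forall x y, 0 <= d x y)%R -> (1 <= p < q)%R -> (forall x, in_lp_sphere q (xi x)) ->
  eps_xi d p (fun x => mazur_map (q / p) (xi x)) <= (q / p)%:E * eps_xi d q xi.
Proof.
move=> d0 pq hxi; have /andP[p1 p_lt_q] := pq.
have q0 : (0 < q)%R by lra.
have r0 : (0 <= q / p)%R by rewrite divr_ge0//; lra.
apply: ge_ereal_sup => _ [->|[x [y [xy ->]]]].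
  by rewrite mule_ge0 ?lee_fin//; apply: ereal_sup_ubound; left.
have dV0 : 0 <= ((d x y)^-1)%:E by rewrite lee_fin invr_ge0.
have := lpnorm_mazur_map_sub pq (lpsum_sphere q0 (hxi x)) (lpsum_sphere q0 (hxi y)).
move=> /(lee_wpmul2r dV0) /le_trans; apply; rewrite -muleA.
by apply: lee_wpmul2l; rewrite ?lee_fin//; apply: ereal_sup_ubound; right; exists x, y.
Qed.

End MazurMap.

Theorem corollary2p3p1 (R : realType) (X : choiceType) (d : X -> X -> R)
  (hd : is_metric d) (p q : R) (hp : 1 <= p) (hpq : p <= q) (S : R) (hS : 0 < S) :
  (profile d p S <= (q / p)%:E * profile d q S)%E.
Proof.
have [d0 _ _ _] := hd.
have p0 : 0 < p by lra.
have [<-|pq] := eqVneq p q; first by rewrite divff ?gt_eqF// mul1e.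
have {pq hpq} pq : 1 <= p < q by rewrite hp lt_neqAle pq.
rewrite /profile -ereal_inf_pZl ?divr_gt0//; last lra.
apply: le_ereal_inf_tmp => _ [_ [xi [xi_sphere xi_supp] <-] <-].
apply: (le_trans _ (eps_xi_mazur_map d0 pq xi_sphere)).
apply: ereal_inf_lbound; exists (fun x => mazur_map (q / p) (xi x)) => //; split.
- by move=> x; apply: in_lp_sphere_mazur_map => //; lra.
- by rewrite support_radius_mazur_map ?divr_gt0//; lra.
Qed.
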